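(* Let $v=(x,y,z)^T\in\mathbb{O}^3$ with associator $[v]:=[x,y,z]\neq 0$. Suppose $A=\begin{pmatrix} p & a & \bar c\\ \bar a & m & b\\ c & \bar b & n\end{pmatrix}$ with $p,m,n\in\mathbb{R}$, $a,b,c\in\mathbb{O}$ satisfies $Av = v[v]$, i.e. $$px+ay+\bar c z = x[v],\qquad \bar a x + m y + b z = y[v],\qquad c x+\bar b y + n z = z[v].$$ Then $b$ is orthogonal to $[v]$, i.e. $\operatorname{Re}(b\,\overline{[v]})=0$. (Equivalently, after choosing a basis in which $x=x_1+x_2 i$, $y=y_1+y_2 i+y_3 j$, $z=z_1+z_2 i+z_3 j+z_4 k+z_8\ell$, so that $[v]=2x_2y_3z_8\,k\ell$, the $k\ell$-component $b_5$ of $b$ vanishes.)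
   Context: $\mathbb{O}$ denotes the real octonions, constructed by Cayley–Dickson as $\mathbb{H}\oplus\mathbb{H}\ell$ with standard basis $1,i,j,k,k\ell,j\ell,i\ell,\ell$; octonions are written $w=w_1+w_2 i+w_3 j+w_4 k+w_5 k\ell+w_6 j\ell+w_7 i\ell+w_8\ell$. $\operatorname{Re}(w)=w_1$, $\bar w=2\operatorname{Re}(w)-w$, $|w|^2=w\bar w$. The associator is $[x,y,z]=(xy)z-x(yz)$, which is purely imaginary. Orthogonality is with respect to the Euclidean inner product $\langle u,w\rangle=\operatorname{Re}(u\bar w)$ on $\mathbb{O}\cong\mathbb{R}^8$. Any triple of octonions can be brought to the stated ''generic'' form by a suitable choice of (automorphism-related) basis. *)

From Stdlib Require Import Reals.
Open Scope R_scope.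

(* Quaternions q1 + q2 i + q3 j + q4 k *)
Record quat : Type := Quat { q1 : R; q2 : R; q3 : R; q4 : R }.

Definition qadd (a b : quat) : quat :=
  Quat (q1 a + q1 b) (q2 a + q2 b) (q3 a + q3 b) (q4 a + q4 b).
Definition qopp (a : quat) : quat := Quat (- q1 a) (- q2 a) (- q3 a) (- q4 a).
Definition qconj (a : quat) : quat := Quat (q1 a) (- q2 a) (- q3 a) (- q4 a).
(* Hamilton product: i^2 = j^2 = k^2 = ijk = -1 *)
Definition qmul (a b : quat) : quat :=
  Quat (q1 a * q1 b - q2 a * q2 b - q3 a * q3 b - q4 a * q4 b)
       (q1 a * q2 b + q2 a * q1 b + q3 a * q4 b - q4 a * q3 b)
       (q1 a * q3 b - q2 a * q4 b + q3 a * q1 b + q4 a * q2 b)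
       (q1 a * q4 b + q2 a * q3 b - q3 a * q2 b + q4 a * q1 b).

(* Octonions w = u + v l  with u, v quaternions (O = H (+) H l).
   Coordinates: w1..w4 = components of u on 1,i,j,k;
   w5 = k-comp of v (k l), w6 = j-comp (j l), w7 = i-comp (i l), w8 = real comp (l). *)
Record oct : Type := Oct { ofst : quat; osnd : quat }.

Definition oadd (x y : oct) : oct := Oct (qadd (ofst x) (ofst y)) (qadd (osnd x) (osnd y)).
Definition oopp (x : oct) : oct := Oct (qopp (ofst x)) (qopp (osnd x)).
Definition osub (x y : oct) : oct := oadd x (oopp y).
(* Cayley--Dickson product: (a + b l)(c + d l) = (a c - conj(d) b) + (d a + b conj(c)) l *)
Definition omul (x y : oct) : oct :=
  Oct (qadd (qmul (ofst x) (ofst y)) (qopp (qmul (qconj (osnd y)) (osnd x))))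
      (qadd (qmul (osnd y) (ofst x)) (qmul (osnd x) (qconj (ofst y)))).
Definition oconj (x : oct) : oct := Oct (qconj (ofst x)) (qopp (osnd x)).
Definition oRe (x : oct) : R := q1 (ofst x).
Definition oreal (r : R) : oct := Oct (Quat r 0 0 0) (Quat 0 0 0 0).
Definition ozero : oct := oreal 0.

Definition assoc (x y z : oct) : oct :=
  osub (omul (omul x y) z) (omul x (omul y z)).

Definition oinner (u w : oct) : R := oRe (omul u (oconj w)).

From Stdlib Require Import Reals Lra.
Open Scope R_scope.

(* Write [v] = [x,y,z] and s = Im x.  Pair the three equations
   of A v = v [v] with x s, y s and z s respectively and add them up.
   - On the right, <u [v], u s> = |u|^2 <[v], s> = 0, because the associator
     is orthogonal to the imaginary part of each of its arguments.
   - On the left, the diagonal terms <r u, u s> = r |u|^2 Re s vanish, and the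
     off-diagonal entries pair up: for an imaginary s,
        <a v, u s> + <conj a u, v s> = <a, [u, s, conj v]>.
     By alternativity the a- and c-pairs give <a,[x,Im x,conj y]> = 0 and
     <c,[z,Im x,conj x]> = 0, while the b-pair gives
     <b,[y,Im x,conj z]> = <b,[x,y,z]>. *)

Definition im (w : oct) : oct := osub w (oreal (oRe w)).

Ltac oct_expand :=
  repeat match goal with
  | o : oct |- _ => destruct o as [? ?]
  | q : quat |- _ => destruct q
  end;
  cbv [im oinner assoc osub oadd oopp omul oconj oRe oreal ozero
       qadd qopp qmul qconj ofst osnd q1 q2 q3 q4].

Ltac oct_ring := oct_expand; f_equal; f_equal; ring.

Lemma oinner_add_l (u v w : oct) :
  oinner (oadd u v) w = oinner u w + oinner v w.
Proof. oct_expand. ring. Qed.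

Lemma oinner_zero_r (u : oct) : oinner u ozero = 0.
Proof. oct_expand. ring. Qed.

Lemma oRe_im (w : oct) : oRe (im w) = 0.
Proof. oct_expand. ring. Qed.

(* Left multiplication by u scales inner products by |u|^2 (polarised
   multiplicativity of the octonion norm). *)
Lemma oinner_mul_l (u w s : oct) :
  oinner (omul u w) (omul u s) = oinner u u * oinner w s.
Proof. oct_expand. ring. Qed.

Lemma oinner_real_mul (r : R) (u s : oct) :
  oinner (omul (oreal r) u) (omul u s) = r * oinner u u * oRe s.
Proof. oct_expand. ring. Qed.

Lemma assoc_orth_im (x y z : oct) : oinner (assoc x y z) (im x) = 0.
Proof. oct_expand. ring. Qed.

Lemma oinner_offdiag_pair (a u v s : oct) : oRe s = 0 ->
  oinner (omul a v) (omul u s) + oinner (omul (oconj a) u) (omul v s)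
  = oinner a (assoc u s (oconj v)).
Proof.
  destruct s as [[s1 s2 s3 s4] t]; cbv [oRe ofst q1]; intros ->.
  oct_expand. ring.
Qed.

(* Left alternativity: [u, Im u, w] = 0. *)
Lemma assoc_im_left_alt (u w : oct) : assoc u (im u) w = ozero.
Proof. oct_ring. Qed.

(* Right alternativity: [w, Im u, conj u] = 0. *)
Lemma assoc_im_right_alt (u w : oct) : assoc w (im u) (oconj u) = ozero.
Proof. oct_ring. Qed.

(* [y, Im x, conj z] = [x, y, z], since the associator is real-trilinear,
   vanishes when an argument is real, and is alternating. *)
Lemma assoc_im_conj (x y z : oct) : assoc y (im x) (oconj z) = assoc x y z.
Proof. oct_ring. Qed.

Theorem lemma2 (x y z : oct) (p m n : R) (a b c : oct) :
  assoc x y z <> ozero ->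
  oadd (oadd (omul (oreal p) x) (omul a y)) (omul (oconj c) z)
    = omul x (assoc x y z) ->
  oadd (oadd (omul (oconj a) x) (omul (oreal m) y)) (omul b z)
    = omul y (assoc x y z) ->
  oadd (oadd (omul c x) (omul (oconj b) y)) (omul (oreal n) z)
    = omul z (assoc x y z) ->
  oinner b (assoc x y z) = 0.
Proof.
  intros _ Ex Ey Ez.
  apply (f_equal (fun w => oinner w (omul x (im x)))) in Ex.
  apply (f_equal (fun w => oinner w (omul y (im x)))) in Ey.
  apply (f_equal (fun w => oinner w (omul z (im x)))) in Ez.
  rewrite !oinner_add_l, !oinner_real_mul, oinner_mul_l, assoc_orth_im,
    oRe_im in Ex, Ey, Ez.
  pose proof (oinner_offdiag_pair a x y (im x) (oRe_im x)) as Pa.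
  pose proof (oinner_offdiag_pair c z x (im x) (oRe_im x)) as Pc.
  pose proof (oinner_offdiag_pair b y z (im x) (oRe_im x)) as Pb.
  rewrite assoc_im_left_alt, oinner_zero_r in Pa.
  rewrite assoc_im_right_alt, oinner_zero_r in Pc.
  rewrite assoc_im_conj in Pb.
  lra.
Qed.
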